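(* Let $d\ge 3$ and $h\ge 1$. The order of the sandpile group $G(d,h)$ is $$|G(d,h)| = d(d-1)^h\,[\theta(d,h+1)]^{d-1}\prod_{n=1}^{h-1}[\theta(d,h+1-n)]^{(d-2)d(d-1)^{n-1}},$$ where $\theta(d,n) := \frac{(d-1)^n-1}{d-2}$.
   Context: Let $\mathcal{T}(d,h)$ be the rooted tree in which the root $0$ has $d$ children, every vertex at distance $1,\dots,h-1$ from the root has $d-1$ children, and the vertices at distance $h$ are leaves. Let $V$ be its vertex set, $A$ its adjacency matrix, $\Delta := dI-A$, and $\Lambda\subset\mathbb{Z}^V$ the lattice spanned by the rows of $\Delta$. Then $G(d,h):=\mathbb{Z}^V/\Lambda$. *)

From HB Require Import structures.
From mathcomp Require Import all_boot all_order all_algebra.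
Set Implicit Arguments. Unset Strict Implicit. Unset Printing Implicit Defensive.
Import Order.TTheory GRing.Theory Num.Theory.

(* Vertices of T(d,h) are encoded as address sequences from the root:
   root = [::]; children of the root: [:: i], i < d;
   children of a non-root vertex s: rcons s j, j < d-1. *)
Fixpoint level (d k : nat) : seq (seq nat) :=
  match k with
  | 0 => [:: [::]]
  | k'.+1 =>
      match k' with
      | 0 => [seq [:: i] | i <- iota 0 d]
      | _ => [seq rcons s j | s <- level d k', j <- iota 0 d.-1]
      end
  end.

Definition verts (d h : nat) : seq (seq nat) :=
  flatten [seq level d k | k <- iota 0 h.+1].

Definition V (d h : nat) : finType := seq_sub (verts d h).

Definition child (u v : seq nat) : bool :=
  (v != [::]) && (take (size v).-1 v == u).

Definition adj d h (u v : V d h) : bool :=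
  child (ssval u) (ssval v) || child (ssval v) (ssval u).

Local Open Scope ring_scope.

Definition Delta d h (u v : V d h) : int :=
  (d%:Z * (u == v)%:Z) - (adj u v)%:Z.

Definition in_Lambda d h (x : V d h -> int) : Prop :=
  exists c : V d h -> int, forall w, x w = \sum_(v : V d h) c v * Delta v w.

(* The group G(d,h) = Z^V / Lambda has exactly N elements: there is a
   family of N representatives, one for each coset. *)
Definition sandpile_order_is d h (N : nat) : Prop :=
  exists r : 'I_N -> (V d h -> int),
    (forall x : V d h -> int, exists i, in_Lambda (fun w => x w - r i w)) /\
    (forall i j, in_Lambda (fun w => r i w - r j w) -> i = j).

Local Close Scope ring_scope.

(* theta(d,n) = ((d-1)^n - 1)/(d-2)  (exact division for d >= 3) *)
Definition theta (d n : nat) : nat := ((d - 1) ^ n - 1) %/ (d - 2).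

Definition order_formula (d h : nat) : nat :=
  d * (d - 1) ^ h * (theta d h.+1) ^ (d - 1) *
  \prod_(1 <= n < h) (theta d (h + 1 - n)) ^ ((d - 2) * d * (d - 1) ^ (n - 1)).

(* Order the vertices breadth-first. Over Q the matrix [Delta = d I - A] factors as
   [L D L^T], where [L = I - (child relation) D^-1] is unitriangular and [D] is
   diagonal with an entry [c_k] depending only on the depth [k] of the vertex: the
   factorisation holds as soon as [c_k + (number of children) / c_(k+1) = d], and this
   recursion is solved by [c_0 = d (d-1)^h / theta(h+1)] and
   [c_k = theta(h-k+2) / theta(h-k+1)] for [k >= 1]. Hence [det Delta] is the product
   of the [c_k] over all vertices, which telescopes to the stated formula. Finally, by
   the Smith normal form, the row lattice of a nonsingular integer matrix [M] has
   index [|det M|] in [Z^n]. *)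

From mathcomp Require Import all_boot all_order all_algebra.
From mathcomp Require Import zify ring.
Set Implicit Arguments. Unset Strict Implicit. Unset Printing Implicit Defensive.
Import Order.TTheory GRing.Theory Num.Theory.

Section RowLatticeIndex.
Variable n : nat.
Local Open Scope ring_scope.

Definition in_row_lattice (M : 'M[int]_n) (x : 'rV[int]_n) : Prop :=
  exists c : 'rV[int]_n, x = c *m M.

Definition lattice_index_is (M : 'M[int]_n) (N : nat) : Prop :=
  exists r : 'I_N -> 'rV[int]_n,
    (forall x, exists i, in_row_lattice M (x - r i)) /\
    (forall i j, in_row_lattice M (r i - r j) -> i = j).

Lemma lattice_index_unimodular (L M R : 'M[int]_n) N :
  L \in unitmx -> R \in unitmx ->
  lattice_index_is M N -> lattice_index_is (L *m M *m R) N.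
Proof.
move=> uL uR [r [r_cover r_inj]]; exists (fun i => r i *m R); split.
  move=> x; have [i [c xrc]] := r_cover (x *m invmx R); exists i.
  by exists (c *m invmx L); rewrite !mulmxA mulmxKV // -xrc mulmxBl mulmxKV.
move=> i j [c rijc]; apply: r_inj; exists (c *m L).
by rewrite -(mulmxK uR (r i - r j)) mulmxBl rijc !mulmxA mulmxK.
Qed.

Lemma eq_int_residues (a b z : int) :
  0 <= a < `|z|%:Z -> 0 <= b < `|z|%:Z -> (z %| a - b)%Z -> a = b.
Proof.
move=> ha hb; rewrite -eqz_mod_dvd => /eqP ab.
by rewrite -(modz_small ha) -(modz_small hb) !modz_abs.
Qed.

Lemma lattice_index_diag (dl : 'I_n -> int) : (forall i, dl i != 0) ->
  lattice_index_is (diag_mx (\row_i dl i)) (\prod_i `|dl i|)%N.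
Proof.
move=> dl_neq0; pose a i := `|dl i|%N.
pose T := {dffun forall i : 'I_n, 'I_(a i)}.
have cardT : #|T| = (\prod_i a i)%N.
  rewrite card_dep_ffun foldr_map [index_enum _]unlock -enumT.
  by elim: (enum _) => [|i s IH]; rewrite ?big_nil ?big_cons //= IH card_ord.
pose rep (f : T) : 'rV[int]_n := \row_i (f i : nat)%:Z.
exists (fun k => rep (enum_val (cast_ord (esym cardT) k))); split.
  move=> x; pose y i := x 0 i.
  have res_lt i : (`|(y i %% dl i)%Z| < a i)%N.
    have := ltz_mod (y i) (dl_neq0 i); have := modz_ge0 (y i) (dl_neq0 i).
    by rewrite /a; lia.
  exists (cast_ord cardT (enum_rank ([ffun i => Ordinal (res_lt i)] : T))).
  rewrite cast_ordK enum_rankK; exists (\row_i (y i %/ dl i)%Z).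
  apply/rowP => i; rewrite mul_mx_diag !mxE ffunE /= gez0_abs ?modz_ge0 //.
  by rewrite /y {1}(divz_eq (x 0 i) (dl i)) addrK.
move=> i j [c rijc]; apply/(can_inj (cast_ordKV cardT))/enum_val_inj.
apply/ffunP => k; apply/val_inj/eqP; rewrite -(eqr_nat int) !natz; apply/eqP.
apply: (@eq_int_residues _ _ (dl k)); rewrite ?ltz_nat ?ltn_ord //.
have := congr1 (fun y : 'rV[int]_n => y 0 k) rijc; rewrite mul_mx_diag !mxE => ->.
exact: dvdz_mull.
Qed.

Lemma absz_unit (x : int) : x \is a GRing.unit -> `|x|%N = 1%N.
Proof. by case/orP => /eqP ->. Qed.

Lemma lattice_index_det (M : 'M[int]_n) : \det M != 0 -> lattice_index_is M `|\det M|.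
Proof.
case: (int_Smith_normal_form M) => L uL [R uR [dl _ ->]].
have -> : \matrix_(i < n, j < n) (dl`_i *+ (i == j :> nat)) = diag_mx (\row_i dl`_i).
  by apply/matrixP => i j; rewrite !mxE.
rewrite !det_mulmx det_diag !mulf_eq0 !negb_or => /andP [/andP [_ /prodf_neq0 dl_neq0] _].
rewrite !abszM (@absz_unit (\det L)) ?(@absz_unit (\det R)) -?unitmxE //.
rewrite mul1n muln1 (big_morph _ abszM absz1).
rewrite (eq_bigr (fun i : 'I_n => absz dl`_i)) => [|i _]; last by rewrite mxE.
apply: lattice_index_unimodular => //; apply: lattice_index_diag => i.
by have := dl_neq0 i isT; rewrite mxE.
Qed.

End RowLatticeIndex.

Section ForestLaplacian.
Local Open Scope ring_scope.
Variables (F : fieldType) (n : nat) (ch : rel 'I_n) (c : 'I_n -> F) (a : F).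
Hypothesis ch_lt : forall i j, ch i j -> (i < j)%N.
Hypothesis ch_parent_uniq : forall i j k, ch i k -> ch j k -> i = j.
Hypothesis c_neq0 : forall i, c i != 0.
Hypothesis c_balance : forall i, c i + \sum_(j | ch i j) (c j)^-1 = a.

Definition forest_adj : 'M[F]_n := \matrix_(i, j) (ch i j || ch j i)%:R.

Definition forest_factor : 'M[F]_n := \matrix_(i, j) ((i == j)%:R - (ch i j)%:R / c j).

Let ch_irr i : ch i i = false.
Proof. by apply/negP => /ch_lt; rewrite ltnn. Qed.

Let sum_delta (G : 'I_n -> F) i : \sum_k (i == k)%:R * G k = G i.
Proof.
rewrite (bigD1 i) //= eqxx mul1r big1 ?addr0 // => k ki.
by rewrite eq_sym (negbTE ki) mul0r.
Qed.

Lemma forest_laplacian_LDLt :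
  a%:M - forest_adj = forest_factor *m diag_mx (\row_i c i) *m forest_factor^T.
Proof.
apply/matrixP => i j.
have term k : (forest_factor *m diag_mx (\row_k c k)) i k * forest_factor^T k j =
    (i == k)%:R * ((j == k)%:R * c k - (ch j k)%:R) - (j == k)%:R * (ch i k)%:R
    + (ch i k && ch j k)%:R / c k.
  rewrite mul_mx_diag !mxE; have := c_neq0 k.
  by case: (i == k); case: (j == k); case: (ch i k); case: (ch j k) => /= ck; field.
rewrite [RHS]mxE (eq_bigr _ (fun k _ => term k)) !mxE !big_split /= sumrN !sum_delta.
case: (eqVneq i j) => [<-|ij].
  rewrite ch_irr /= mulr1n mul1r !subr0 -(c_balance i) big_mkcond; congr (_ + _).
  by apply: eq_bigr => k _; rewrite andbb; case: (ch i k); rewrite ?mul1r ?mul0r.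
rewrite big1 => [|k _]; last first.
  case ik: (ch i k); case jk: (ch j k); rewrite ?mul0r //.
  by rewrite (ch_parent_uniq ik jk) eqxx in ij.
rewrite mulr0n mul0r addr0 sub0r.
case ij': (ch i j); case ji: (ch j i) => /=; rewrite ?subr0 ?sub0r ?oppr0 //.
by have := ch_lt ij'; rewrite ltnNge ltnW ?ch_lt.
Qed.

Lemma det_forest_factor : \det forest_factor = 1.
Proof.
rewrite -det_tr det_trig.
  by apply: big1 => k _; rewrite !mxE eqxx ch_irr mul0r subr0.
apply/is_trig_mxP => i j ij; rewrite !mxE.
have -> : (j == i) = false by apply/eqP => ji; rewrite ji ltnn in ij.
case jiE: (ch j i); last by rewrite mul0r subr0.
by have := ch_lt jiE; rewrite ltnNge ltnW.
Qed.

Lemma det_forest_laplacian : \det (a%:M - forest_adj) = \prod_i c i.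
Proof.
rewrite forest_laplacian_LDLt !det_mulmx det_tr det_forest_factor mul1r mulr1 det_diag.
by apply: eq_bigr => i _; rewrite mxE.
Qed.

End ForestLaplacian.

Section Telescope.
Local Open Scope ring_scope.

Lemma prod_ratio_telescope (F : fieldType) (a : nat -> F) (e : nat -> nat) h :
  (forall k, (k <= h.+1)%N -> a k != 0) -> (forall k, e k <= e k.+1)%N ->
  \prod_(1 <= k < h.+1) (a k / a k.+1) ^+ e k =
  a 1%N ^+ e 0%N * \prod_(1 <= k < h.+1) a k ^+ (e k - e k.-1) / a h.+1 ^+ e h.
Proof.
move=> + e_incr; elim: h => [|h IH] a_neq0.
  by rewrite !big_geq // mulr1 divff // expf_neq0 ?a_neq0.
rewrite (big_nat_recr h.+1) // (big_nat_recr h.+1) //= IH => [|k kh]; last first.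
  by apply: a_neq0; rewrite ltnW.
rewrite exprB ?unitfE ?a_neq0 // expr_div_n; field.
by rewrite !expf_neq0 ?a_neq0.
Qed.

End Telescope.

Section TreeVertices.
Variable d : nat.

Lemma size_in_level k s : s \in level d k -> size s = k.
Proof.
elim: k s => [|[|k] IH] s /=; first by rewrite inE => /eqP ->.
  by case/mapP => i _ ->.
by case/allpairsP => -[x j] [/= /IH xk _ ->]; rewrite size_rcons xk.
Qed.

Lemma level_uniq k : uniq (level d k).
Proof.
elim: k => [|[|k] IH] //=; first by rewrite map_inj_uniq ?iota_uniq // => i j [].
apply: allpairs_uniq; rewrite ?iota_uniq // => -[x j] [y l] _ _ /=.
by case/rcons_inj => -> ->.
Qed.

Lemma size_level k : size (level d k) = if k is 0 then 1 else d * (d - 1) ^ k.-1.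
Proof.
elim: k => [|[|k] IH] //=; first by rewrite size_map size_iota muln1.
by rewrite size_allpairs IH size_iota subn1 expnSr mulnA.
Qed.

Lemma size_level_le k : 1 < d -> size (level d k) <= size (level d k.+1).
Proof.
move=> d_gt1; rewrite !size_level; case: k => [|k] /=; first by rewrite muln1 ltnW.
by rewrite leq_mul2l expnS leq_pmull ?orbT // subn_gt0.
Qed.

Variable h : nat.

Lemma size_in_verts s : s \in verts d h -> size s <= h.
Proof. by case/flatten_mapP => k; rewrite mem_iota => kh /size_in_level ->. Qed.

Lemma in_verts_level s : s \in verts d h -> s \in level d (size s).
Proof. by case/flatten_mapP => k _ sk; rewrite (size_in_level sk). Qed.

Lemma verts_uniq : uniq (verts d h).
Proof.
rewrite /verts; elim: h => [|m IH] //.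
have top : flatten [seq level d k | k <- iota (0 + m.+1) 1] = level d m.+1.
  by rewrite /= cats0.
rewrite -addn1 iotaD map_cat flatten_cat cat_uniq IH top level_uniq andbT.
apply/hasPn => s /size_in_level sm; apply/negP => /flatten_mapP [k].
by rewrite mem_iota => /andP [_ km] /size_in_level; lia.
Qed.

Lemma index_verts_lt u v : u \in verts d h -> v \in verts d h ->
  size u < size v -> index u (verts d h) < index v (verts d h).
Proof.
move=> uV vV uv; pose low := flatten [seq level d k | k <- iota 0 (size v)].
have -> : verts d h = low ++ flatten [seq level d k | k <- iota (size v) (h.+1 - size v)].
  by rewrite /verts -flatten_cat -map_cat -iotaD subnKC // leqW // size_in_verts.
have u_low : u \in low.
  by apply/flatten_mapP; exists (size u); rewrite ?mem_iota ?in_verts_level.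
have v_low : v \notin low.
  by apply/flatten_mapP => -[k]; rewrite mem_iota => /andP [_ kv] /size_in_level; lia.
by rewrite !index_cat u_low (negbTE v_low) (leq_trans _ (leq_addr _ _)) ?index_mem.
Qed.

End TreeVertices.

Lemma child_rcons x j u : child u (rcons x j) = (x == u).
Proof. by rewrite /child size_rcons -cats1 take_size_cat //; case: x. Qed.

Lemma size_child u v : child u v -> size v = (size u).+1.
Proof. by case: v => // a v /andP [_ /eqP <-]; rewrite size_take /= ltnSn. Qed.

Lemma child_parent_uniq u w v : child u v -> child w v -> u = w.
Proof. by case/andP => _ /eqP <- /andP [_ /eqP <-]. Qed.

Definition nchildren (d h k : nat) : nat :=
  if k < h then (if k is 0 then d else d - 1) else 0.

Section ChildCount.
Variable d : nat.

Lemma count_child_level u k : u \in level d k ->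
  count (child u) (level d k.+1) = if k is 0 then d else d - 1.
Proof.
case: k => [|k] uk.
  move: uk; rewrite inE => /eqP -> /=.
  by rewrite count_map (@eq_count _ _ predT) ?count_predT ?size_iota.
have -> : level d k.+2 = [seq rcons s j | s <- level d k.+1, j <- iota 0 d.-1] by [].
rewrite count_flatten -map_comp (eq_map (g := fun x => (x == u) * (d - 1))); last first.
  move=> x /=; rewrite count_map (@eq_count _ _ (fun=> x == u)) => [|j]; last first.
    by rewrite /= child_rcons.
  by case: (x == u); rewrite ?count_predT ?count_pred0 ?size_iota ?subn1 ?mul1n.
transitivity (count (pred1 u) (level d k.+1) * (d - 1)).
  by elim: (level d k.+1) => //= x s ->; rewrite mulnDl.
by rewrite (count_uniq_mem _ (level_uniq d k.+1)) uk mul1n.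
Qed.

Lemma count_child_level_other u m : m != (size u).+1 -> count (child u) (level d m) = 0.
Proof.
move=> mu; apply/eqP; rewrite -leqn0 leqNgt -has_count; apply/hasPn => s sm.
by apply: contra mu => /size_child <-; rewrite (size_in_level sm).
Qed.

Lemma count_child_verts h u : u \in verts d h ->
  count (child u) (verts d h) = nchildren d h (size u).
Proof.
move=> uV; rewrite /nchildren count_flatten -map_comp sumnE big_map.
case: ltnP => uh.
  rewrite (bigD1_seq (size u).+1) ?mem_iota ?iota_uniq //=.
  rewrite (count_child_level (in_verts_level uV)) big1 ?addn0 // => m.
  exact: count_child_level_other.
apply: big1_seq => m /andP [_]; rewrite mem_iota => /andP [_ mh].
by apply: count_child_level_other; rewrite neq_ltn ltnS (leq_trans _ uh).
Qed.

End ChildCount.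

Section VertexOrder.
Variables d h : nat.
Local Notation n := #|V d h|.

Definition vtx (k : 'I_n) : seq nat := val (enum_val k).

Lemma map_val_enum : map val (enum (V d h)) = verts d h.
Proof. by rewrite enumT unlock val_seq_sub_enum // verts_uniq. Qed.

Lemma vtx_in k : vtx k \in verts d h.
Proof. exact: ssvalP. Qed.

Lemma index_vtx k : index (vtx k) (verts d h) = k.
Proof.
rewrite -[verts d h]map_val_enum /vtx index_map; last exact: val_inj.
by rewrite (enum_val_nth (enum_val k)) index_uniq ?enum_uniq // -cardE.
Qed.

Lemma vtx_inj : injective vtx.
Proof. by move=> i j ij; apply: val_inj; rewrite /= -!index_vtx ij. Qed.

Lemma big_vtx (R : Type) (idx : R) (op : Monoid.com_law idx) (F : seq nat -> R) :
  \big[op/idx]_(k < n) F (vtx k) = \big[op/idx]_(x <- verts d h) F x.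
Proof. by rewrite -(big_enum_val (F \o val)) -[in RHS]map_val_enum big_map enumT. Qed.

Local Open Scope ring_scope.

Lemma prod_verts_by_depth (R : comNzSemiRingType) (f : nat -> R) :
  \prod_(x <- verts d h) f (size x) = \prod_(k < h.+1) f k ^+ size (level d k).
Proof.
rewrite big_flatten big_map -(big_mkord xpredT (fun k => f k ^+ size (level d k))).
apply: eq_big_seq => k _; rewrite (eq_big_seq (fun=> f k)) => [|x /size_in_level -> //].
by rewrite big_const_seq count_predT iter_mulr_1.
Qed.

End VertexOrder.

Section Theta.
Variable d : nat.
Hypothesis d_gt2 : 2 < d.

Lemma theta_expn n : (d - 1) ^ n = (d - 2) * theta d n + 1.
Proof.
have expn_gt0 : 0 < (d - 1) ^ n by rewrite expn_gt0 subn_gt0 ltnW.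
have dvd : d - 2 %| (d - 1) ^ n - 1.
  rewrite -(eqn_mod_dvd _ expn_gt0); have -> : d - 1 = 1 + (d - 2) by lia.
  by rewrite -modnXm modnDr modnXm exp1n.
by rewrite /theta mulnC divnK // subnK.
Qed.

Lemma theta0 : theta d 0 = 0.
Proof. by rewrite /theta expn0 subnn div0n. Qed.

Lemma thetaS n : theta d n.+1 = (d - 1) * theta d n + 1.
Proof.
apply/eqP; rewrite -(eqn_pmul2l (_ : 0 < d - 2)); last lia.
rewrite -(eqn_add2r 1) -theta_expn expnS theta_expn.
have -> : d - 1 = (d - 2) + 1 by lia.
by apply/eqP; ring.
Qed.

Lemma theta1 : theta d 1 = 1.
Proof. by rewrite thetaS theta0 muln0. Qed.

Lemma theta_gt0 n : 0 < n -> 0 < theta d n.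
Proof. by case: n => // n _; rewrite thetaS addn1. Qed.

Lemma order_formula_telescoped h : 0 < h ->
  order_formula d h = d * (d - 1) ^ h *
    \prod_(1 <= k < h.+1) theta d (h.+2 - k) ^ (size (level d k) - size (level d k.-1)).
Proof.
move=> h_gt0; rewrite big_ltn // big_add1 [h.+1.-1]/=.
have -> : size (level d 1) - size (level d 0) = d - 1 by rewrite !size_level /= muln1.
rewrite /order_formula mulnA; congr (_ * _ ^ _ * _).
apply: eq_big_nat => k /andP [k_gt0 _]; rewrite subSS addn1; congr (_ ^ _).
case: k k_gt0 => // k _; rewrite !size_level /= subSS subn0 expnS mulnA -mulnBl.
by congr (_ * _); rewrite mulnBl mulnBr muln1 -subnDA addnn mul2n.
Qed.

End Theta.

Section TreeWeights.
Variables d h : nat.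
Hypotheses (d_gt2 : 2 < d) (h_gt0 : 0 < h).
Local Open Scope ring_scope.

Definition tree_weight (k : nat) : rat :=
  if k is 0 then (d * (d - 1) ^ h)%N%:R / (theta d h.+1)%:R
  else (theta d (h.+2 - k))%:R / (theta d (h.+1 - k))%:R.

Lemma tree_weight_gt0 k : (k <= h)%N -> 0 < tree_weight k.
Proof.
rewrite /tree_weight; case: k => [|k] kh; apply: divr_gt0;
  rewrite ltr0n ?theta_gt0 ?subn_gt0 ?muln_gt0 ?expn_gt0 ?subn_gt0 //; lia.
Qed.

Lemma tree_weight_balance k : (k <= h)%N ->
  tree_weight k + (nchildren d h k)%:R / tree_weight k.+1 = d%:R.
Proof.
move=> kh; set x : rat := (d - 1)%N%:R.
have dE : d%:R = x + 1 by rewrite /x natr1 subn1 prednK // (ltn_trans _ d_gt2).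
have d2E : (d - 2)%N%:R = x - 1 by rewrite natrB ?dE; [ring | apply: ltnW].
have tS m : (theta d m.+1)%:R = x * (theta d m)%:R + 1 by rewrite thetaS // natrD natrM.
have t_neq0 m : (0 < m)%N -> (theta d m)%:R != 0 :> rat.
  by move/(theta_gt0 d_gt2); rewrite pnatr_eq0 -lt0n.
rewrite /nchildren /tree_weight; case: (ltngtP k h) kh => // [k_lt_h | ->] _; last first.
  case: h h_gt0 => // h' _.
  have -> : (h'.+3 - h'.+1 = 2)%N by lia.
  have -> : (h'.+2 - h'.+1 = 1)%N by lia.
  by rewrite mul0r addr0 !tS theta0 mulr0 add0r mulr1 divr1 dE.
(* [set t := ...] keeps [field] from unfolding [theta] in its side conditions. *)
case: k k_lt_h => [|k] k_lt_h.
  rewrite (theta_expn d_gt2 h) !subn1 /= natrM natrD natrM d2E tS dE.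
  have := t_neq0 _ (ltn0Sn h); rewrite tS; have := t_neq0 _ h_gt0.
  by set t := (theta d h)%:R => ? ?; field; apply/andP.
have -> : (h.+2 - k.+1 = (h - k.+1).+2)%N by lia.
have -> : (h.+1 - k.+1 = (h - k.+1).+1)%N by lia.
have -> : (h.+2 - k.+2 = (h - k.+1).+1)%N by lia.
have -> : (h.+1 - k.+2 = h - k.+1)%N by lia.
have m_gt0 : (0 < h - k.+1)%N by rewrite subn_gt0.
have := t_neq0 _ (ltn0Sn (h - k.+1)); have := t_neq0 _ m_gt0; rewrite -/x !tS dE.
by set t := (theta d (h - k.+1))%:R => ? ?; field; apply/andP.
Qed.

Lemma prod_tree_weights :
  \prod_(k < h.+1) tree_weight k ^+ size (level d k) = (order_formula d h)%:R.
Proof.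
pose a k : rat := (theta d (h.+2 - k))%:R.
have a_neq0 k : (k <= h.+1)%N -> a k != 0.
  by move=> kh; rewrite pnatr_eq0 -lt0n theta_gt0 // subn_gt0.
have weightE k : (0 < k)%N -> tree_weight k = a k / a k.+1.
  by case: k => // k _; rewrite /tree_weight /a subSS.
rewrite -(big_mkord xpredT (fun k => tree_weight k ^+ size (level d k))) big_ltn //.
rewrite (eq_big_nat _ _ (F2 := fun k => (a k / a k.+1) ^+ size (level d k))); last first.
  by move=> k /andP [k_gt0 _]; rewrite weightE.
rewrite prod_ratio_telescope // => [|k]; last by apply: size_level_le; rewrite ltnW.
rewrite /tree_weight /a subSS subn0 subSnn theta1 // mulr1n expr1n divr1 !expr1.
rewrite mulrA divfK ?(a_neq0 1%N) // order_formula_telescoped // !natrM natrX natr_prod.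
by congr (_ * _); apply: eq_bigr => k _; rewrite natrX.
Qed.

Lemma order_formula_gt0 : (0 < order_formula d h)%N.
Proof.
rewrite -(ltr0n rat) -prod_tree_weights.
by apply: prodr_gt0 => k _; rewrite exprn_gt0 // tree_weight_gt0 // -ltnS.
Qed.

End TreeWeights.

Section SandpileMatrix.
Variables d h : nat.
Local Notation n := #|V d h|.
Local Open Scope ring_scope.

Definition Delta_mx : 'M[int]_n := \matrix_(i, j) Delta (enum_val i) (enum_val j).

Lemma in_LambdaP (x : V d h -> int) :
  in_Lambda x <-> in_row_lattice Delta_mx (\row_k x (enum_val k)).
Proof.
have mulE (c : 'rV[int]_n) w :
    (c *m Delta_mx) 0 (enum_rank w) = \sum_v c 0 (enum_rank v) * Delta v w.
  rewrite mxE (big_enum_val (fun v => c 0 (enum_rank v) * Delta v w)) /=.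
  by apply: eq_bigr => k _; rewrite !mxE enum_valK enum_rankK.
split=> [[c xc] | [c xc]].
  exists (\row_k c (enum_val k)); apply/rowP => k.
  rewrite mxE xc -[k in RHS]enum_valK mulE.
  by apply: eq_bigr => v _; rewrite mxE enum_rankK.
exists (fun v => c 0 (enum_rank v)) => w.
by have := congr1 (fun y : 'rV[int]_n => y 0 (enum_rank w)) xc; rewrite mxE enum_rankK mulE.
Qed.

Lemma sandpile_order_of_index N : lattice_index_is Delta_mx N -> sandpile_order_is d h N.
Proof.
move=> [r [r_cover r_inj]]; exists (fun i w => r i 0 (enum_rank w)); split.
  move=> x; have [i [c xc]] := r_cover (\row_k x (enum_val k)); exists i.
  by apply/in_LambdaP; exists c; rewrite -xc; apply/rowP => k; rewrite !mxE enum_valK.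
move=> i j /in_LambdaP [c rc]; apply: r_inj; exists c.
by rewrite -rc; apply/rowP => k; rewrite !mxE enum_valK.
Qed.

Let ch (i j : 'I_n) := child (vtx i) (vtx j).
Let c (i : 'I_n) := tree_weight d h (size (vtx i)).

Lemma map_Delta_mx : map_mx intr Delta_mx = d%:R%:M - forest_adj rat ch.
Proof.
apply/matrixP => i j; rewrite !mxE /Delta (inj_eq enum_val_inj).
have -> : adj (enum_val i) (enum_val j) = ch i j || ch j i by [].
case: (i == j); case: (_ || _);
  by rewrite ?mulr1n ?mulr0n rmorphB rmorphM /= -!pmulrn ?mulr1 ?mulr0.
Qed.

Lemma vtx_child_lt i j : ch i j -> (i < j)%N.
Proof.
move=> ij; rewrite -(index_vtx i) -(index_vtx j).
by apply: index_verts_lt; rewrite ?vtx_in ?(size_child ij).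
Qed.

Hypotheses (d_gt2 : (2 < d)%N) (h_gt0 : (0 < h)%N).

Lemma vtx_weight_balance i : c i + \sum_(j | ch i j) (c j)^-1 = d%:R.
Proof.
set w := tree_weight d h (size (vtx i)).+1.
rewrite big_mkcond (eq_bigr (fun j => if child (vtx i) (vtx j) then w^-1 else 0)); last first.
  by move=> j _; rewrite /ch /c; case: ifP => // /size_child ->.
rewrite (big_vtx d h _ (fun x => if child (vtx i) x then w^-1 else 0)) -big_mkcond.
rewrite big_const_seq iter_addr_0 -[w^-1 *+ _]mulr_natr mulrC count_child_verts ?vtx_in //.
by apply: tree_weight_balance => //; apply: size_in_verts (vtx_in i).
Qed.

Lemma det_Delta_mx : \det Delta_mx = (order_formula d h)%:Z.
Proof.
apply: (@intr_inj rat); rewrite -det_map_mx map_Delta_mx.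
rewrite (det_forest_laplacian vtx_child_lt _ _ vtx_weight_balance) => [|i j k ik jk|i].
- rewrite (big_vtx d h _ (fun x => tree_weight d h (size x))) prod_verts_by_depth.
  exact: prod_tree_weights.
- exact/vtx_inj/(child_parent_uniq ik jk).
by rewrite gt_eqF // tree_weight_gt0 // (size_in_verts (vtx_in i)).
Qed.

Lemma lattice_index_Delta_mx : lattice_index_is Delta_mx (order_formula d h).
Proof.
have det_neq0 : \det Delta_mx != 0.
  by rewrite det_Delta_mx -natz pnatr_eq0 -lt0n order_formula_gt0.
by have := lattice_index_det det_neq0; rewrite det_Delta_mx.
Qed.

End SandpileMatrix.

Theorem theorem2p5 (d h : nat) (hd : 3 <= d) (hh : 1 <= h) :
  sandpile_order_is d h (order_formula d h).
Proof. exact: sandpile_order_of_index (lattice_index_Delta_mx hd hh). Qed.
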